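(* Let $T$ be a TCD map on a minimal BTB graph $G$ and $H$ a hyperplane generic with respect to $T$. For an internal white vertex $w$ with black neighbours $b_1,\dots,b_m$ in counterclockwise order, let $w_i,w_i'$ be the other two neighbours of $b_i$ such that the counterclockwise order around $b_i$ is $w,w_i,w_i'$. Then, computing in the affine chart $\mathbb{CP}^d\setminus H$, $$Y_w=(-1)^{m+1}\,\mathrm{sr}\bigl(T(w);T(w_1),T(w_1'),\dots,T(w_m),T(w_m')\bigr)=-\prod_{i=1}^m\lambda\bigl(T(w_i),T(w_i'),T(w)\bigr).$$
   Context: A BTB graph is a planar bipartite graph (black $B$, white $W$) in a disk or cactus, with boundary white vertices on the boundary and every black vertex of degree $3$. It is minimal if zig-zag paths (turning maximally left at white and right at black vertices) are never closed, never traverse an edge twice, and no two both traverse two distinct edges $e_1$ then $e_2$. A TCD map is $T:W\to\mathbb{CP}^d$ such that the neighbours of each black vertex have pairwise distinct collinear images. $H=\mathbb P(\ker h)$ is generic if it contains no $T(w)$. A VRC in affine gauge with respect to $H$ consists of lifts $V(w)$ with $h(V(w))=1$ and edge weights with $\sum_{w\sim b}\mu(bw)V(w)=0$, so that $\sum_{w\sim b}\mu(bw)=0$. The affine cluster variable is $Y_w=(-1)^{m+1}\prod_{i=1}^m\mu(b_iw_i')/\mu(b_iw_i)$ in this gauge. $\lambda(P_1,P_2,P_3)=(P_1-P_3)/(P_2-P_3)$ for collinear points in an affine chart. The star-ratio of points $P,P_1,P_1',\dots,P_m,P_m'$ with $P$ on each line $P_iP_i'$ is $\mathrm{sr}(P;P_1,P_1',\dots,P_m,P_m')=\prod_i(P_i-P)/\prod_i(P-P_i')$.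 *)

From HB Require Import structures.
From mathcomp Require Import all_boot all_order all_algebra.
From mathcomp Require Import reals.
From mathcomp Require Export complex.
Set Implicit Arguments.
Unset Strict Implicit.
Unset Printing Implicit Defensive.
Import Order.TTheory GRing.Theory Num.Theory.
Local Open Scope ring_scope.

(* Edges are elements of [Ed]; every edge has a black end [bend] and a
   white end [wend].  [rotB e] is the edge following [e] in
   counterclockwise order around its black end, [rotW e] the edge
   following [e] counterclockwise around its white end.  [bdry] marks the
   boundary white vertices; for a boundary white vertex [w], [gap w] is
   the edge at [w] immediately counterclockwise after the boundary of the
   disk (cactus), i.e. the boundary passes through the corner at [w]
   between [finv rotW (gap w)] and [gap w]. *)
Record bgraph := BGraph {
  Wv : finType;
  Bv : finType;
  Ed : finType;
  bend : Ed -> Bv;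
  wend : Ed -> Wv;
  rotB : Ed -> Ed;
  rotW : Ed -> Ed;
  bdry : pred Wv;
  gap : Wv -> Ed
}.
Arguments bend : clear implicits.
Arguments wend : clear implicits.
Arguments rotB : clear implicits.
Arguments rotW : clear implicits.
Arguments bdry : clear implicits.
Arguments gap : clear implicits.

Section Graphs.
Variable G : bgraph.

(* face permutation of the hypermap (rotB, rotW) *)
Definition facep (e : Ed G) : Ed G := rotB G (rotW G e).

(* adjacency of edges sharing a vertex; its classes = connected components *)
Definition eadj : rel (Ed G) :=
  fun e e' => (e' == rotB G e) || (e' == rotW G e).

Definition ncomp : nat := n_comp eadj (Ed G).

Definition wdeg (w : Wv G) : nat := #|[set e | wend G e == w]|.

(* G is a planar bipartite graph embedded in a disk or cactus, with the
   boundary white vertices on the boundary, all black vertices of degree 3 *)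
Definition is_BTB : Prop :=
  [/\ injective (rotB G), injective (rotW G),
      [/\ 
      (forall e e', bend G e = bend G e' <-> fconnect (rotB G) e e'),
      (forall e e', wend G e = wend G e' <-> fconnect (rotW G) e e'),
      (forall b, #|[set e | bend G e == b]| = 3)
       & (forall w, bdry G w -> wend G (gap G w) = w)],
      (* genus 0 (Euler formula, for each connected component) *)
      fcard (rotB G) (Ed G) + fcard (rotW G) (Ed G) + fcard facep (Ed G)
        = #|Ed G| + 2 * ncomp
    & (* the boundary corners of each component lie on one common face *)
      (forall w w', bdry G w -> bdry G w' ->
         connect eadj (gap G w) (gap G w') ->
         fconnect facep (finv (rotW G) (gap G w)) (finv (rotW G) (gap G w')))].

(* A state is an edge together with the direction of traversal:
   [true] = traversed from its black end to its white end. *)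
Definition zstate := (Ed G * bool)%type.

(* one step: turn maximally left at a white vertex (clockwise neighbour),
   maximally right at a black vertex (counterclockwise neighbour); the path
   stops when turning would cross the boundary at a boundary white vertex *)
Definition zstep (s : zstate) : option zstate :=
  let: (e, toW) := s in
  if toW then
    (if bdry G (wend G e) && (e == gap G (wend G e)) then None
     else Some (finv (rotW G) e, false))
  else Some (rotB G e, true).

Fixpoint zit (n : nat) (s : zstate) : option zstate :=
  match n with
  | 0 => Some s
  | n'.+1 => match zit n' s with Some t => zstep t | None => None end
  end.

Definition minimal : Prop :=
  [/\ (* no closed zig-zag path *)
      (forall s n, zit n.+1 s <> Some s),
      (* no zig-zag path traverses an edge twice *)
      (forall s n t, zit n.+1 s = Some t -> t.1 <> s.1)
    & (* no two distinct zig-zag paths both traverse e1 and then e2 <> e1 *)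
      (forall (s1 s2 t1 t2 : zstate) n1 n2,
         (forall n, zit n s1 <> Some s2) -> (forall n, zit n s2 <> Some s1) ->
         s1.1 = s2.1 -> zit n1 s1 = Some t1 -> zit n2 s2 = Some t2 ->
         t1.1 <> s1.1 -> t1.1 <> t2.1)].

End Graphs.

(* Projective geometry in CP^d, points represented by nonzero vectors  *)
(* of C^(d+1) (row vectors); a hyperplane H = P(ker h), h a covector.  *)
Section Proj.
Variable R : realType.
Local Notation C := R[i].
Variable d : nat.

Definition hval (h : 'cV[C]_(d.+1)) (x : 'rV[C]_(d.+1)) : C := (x *m h) 0 0.

Definition pdistinct (u v : 'rV[C]_(d.+1)) : Prop := \rank (col_mx u v) = 2.

Definition pcollinear (u v x : 'rV[C]_(d.+1)) : Prop :=
  (\rank (col_mx u (col_mx v x)) <= 2)%N.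

(* T : W -> CP^d is a TCD map: the neighbours of each black vertex have
   pairwise distinct collinear images *)
Definition is_TCD (G : bgraph) (T : Wv G -> 'rV[C]_(d.+1)) : Prop :=
  (forall w, T w != 0) /\
  (forall e : Ed G,
     let u1 := T (wend G e) in
     let u2 := T (wend G (rotB G e)) in
     let u3 := T (wend G (rotB G (rotB G e))) in
     [/\ pdistinct u1 u2, pdistinct u2 u3, pdistinct u1 u3
       & pcollinear u1 u2 u3]).

Definition generic (G : bgraph) (h : 'cV[C]_(d.+1)) (T : Wv G -> 'rV[C]_(d.+1))
  : Prop := h != 0 /\ forall w, hval h (T w) != 0.

(* VRC in affine gauge w.r.t. H: lifts V(w) of T(w) with h(V(w)) = 1 and
   (nonzero) edge weights mu with sum_{w ~ b} mu(bw) V(w) = 0 *)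
Definition is_VRC_aff (G : bgraph) (T : Wv G -> 'rV[C]_(d.+1))
  (h : 'cV[C]_(d.+1)) (V : Wv G -> 'rV[C]_(d.+1)) (mu : Ed G -> C) : Prop :=
  [/\ (forall w, exists c : C, V w = c *: T w),
      (forall w, hval h (V w) = 1),
      (forall e, mu e != 0)
    & (forall b : Bv G, \sum_(e | bend G e == b) mu e *: V (wend G e) = 0)].

(* the point of the affine chart CP^d \ H represented by x *)
Definition aff (h : 'cV[C]_(d.+1)) (x : 'rV[C]_(d.+1)) : 'rV[C]_(d.+1) :=
  (hval h x)^-1 *: x.

(* u / v for parallel vectors u, v (v <> 0): the scalar k with u = k v *)
Definition vratio (u v : 'rV[C]_(d.+1)) : C :=
  if [pick j | v 0 j != 0] is Some j then u 0 j / v 0 j else 0.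

Definition lam (h : 'cV[C]_(d.+1)) (P1 P2 P3 : 'rV[C]_(d.+1)) : C :=
  vratio (aff h P1 - aff h P3) (aff h P2 - aff h P3).

Definition sr (h : 'cV[C]_(d.+1)) (m : nat) (P : 'rV[C]_(d.+1))
  (Ps Ps' : 'I_m -> 'rV[C]_(d.+1)) : C :=
  \prod_(i < m) vratio (aff h (Ps i) - aff h P) (aff h P - aff h (Ps' i)).

End Proj.

(* The affine cluster variable Y_w, for w = wend e0, with the black
   neighbours b_i = bend (e_i), e_i = rotW^i e0 (counterclockwise order),
   w_i = wend (rotB e_i), w_i' = wend (rotB (rotB e_i)):
   Y_w = (-1)^(m+1) prod_i mu(b_i w_i') / mu(b_i w_i). *)
Definition affY (R : realType) (G : bgraph) (mu : Ed G -> R[i]) (e0 : Ed G)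
  : R[i] :=
  let m := wdeg (wend G e0) in
  (-1) ^+ m.+1 *
  \prod_(i < m) (mu (rotB G (rotB G (iter i (rotW G) e0)))
                 / mu (rotB G (iter i (rotW G) e0))).

From HB Require Import structures.
From mathcomp Require Import all_boot all_order all_algebra.
From mathcomp Require Import reals complex.
Import GRing.Theory Num.Theory.
Local Open Scope ring_scope.

(* In the affine gauge the lift V(w) is the affine point aff(T w), so at a
   black vertex b both the weights and the weighted points sum to zero.
   Eliminating the weight of the edge bw gives
     mu(bw_i) (V(w_i) - V(w)) = mu(bw_i') (V(w) - V(w_i')),
   hence each factor of the star-ratio is mu(bw_i')/mu(bw_i) and each
   lambda(T w_i, T w_i', T w) is its opposite. *)

Lemma affine_relation_ratio (F : fieldType) (M : lmodType F)
    (a0 a1 a2 : F) (x0 x1 x2 : M) :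
  a0 + a1 + a2 = 0 -> a0 *: x0 + a1 *: x1 + a2 *: x2 = 0 -> a1 != 0 ->
  x1 - x0 = (a2 / a1) *: (x0 - x2).
Proof.
move=> /eqP; rewrite -addrA addr_eq0 => /eqP a0E relation a1_neq0.
have centred : a1 *: (x1 - x0) + a2 *: (x2 - x0) = 0.
  rewrite -relation !scalerBr addrACA -opprD -scalerDl -scaleNr -a0E.
  by rewrite addrC addrA.
have balanced : a1 *: (x1 - x0) = a2 *: (x0 - x2).
  by apply/eqP; rewrite -subr_eq0 -scalerN opprB centred.
by rewrite mulrC -scalerA -balanced scalerA mulVf // scale1r.
Qed.

Section Rotations.
Context {G : bgraph}.
Hypothesis bendP : forall e e', bend G e = bend G e' <-> fconnect (rotB G) e e'.
Hypothesis bdeg3 : forall b, #|[set e | bend G e == b]| = 3.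

Lemma big_black_star (M : nmodType) (F : Ed G -> M) (E : Ed G) :
  \sum_(e | bend G e == bend G E) F e =
  F E + F (rotB G E) + F (rotB G (rotB G E)).
Proof.
have starE e : (bend G e == bend G E) = (e \in orbit (rotB G) E).
  by rewrite -fconnect_orbit; apply/eqP/idP => [/esym/bendP | /bendP/esym].
have order3 : order (rotB G) E = 3.
  rewrite -(bdeg3 (bend G E)); apply: eq_card => e.
  by rewrite inE starE -fconnect_orbit.
rewrite (eq_bigl _ _ starE) -big_uniq ?orbit_uniq // /orbit order3 /=.
by rewrite !big_cons big_nil addr0 addrA.
Qed.

Hypothesis wendP : forall e e', wend G e = wend G e' <-> fconnect (rotW G) e e'.

Lemma wend_iter_rotW i e : wend G (iter i (rotW G) e) = wend G e.
Proof. by apply/esym/wendP; apply: fconnect_iter. Qed.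

End Rotations.

Section AffineChart.
Context {R : realType} {d : nat}.
Local Notation C := R[i].
Local Notation vec := 'rV[C]_(d.+1).
Implicit Types (u v x : vec) (h : 'cV[C]_(d.+1)).

Lemma hvalD h x y : hval h (x + y) = hval h x + hval h y.
Proof. by rewrite /hval mulmxDl mxE. Qed.

Lemma hvalZ h (c : C) x : hval h (c *: x) = c * hval h x.
Proof. by rewrite /hval -scalemxAl mxE. Qed.

Lemma hval0 h : hval h 0 = 0.
Proof. by rewrite -(scale0r 0) hvalZ mul0r. Qed.

Lemma vratioZ (k : C) v : v != 0 -> vratio (k *: v) v = k.
Proof.
move=> v_neq0; rewrite /vratio; case: pickP => [j vj_neq0 | v_eq0].
  by rewrite mxE mulfK.
by case/eqP: v_neq0; apply/rowP => j; rewrite mxE; apply/eqP/negbFE/v_eq0.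
Qed.

Lemma pdistinct_neqZ u v (k : C) : pdistinct u v -> u != k *: v.
Proof.
rewrite /pdistinct => rank2; apply/eqP => uE.
suff : (\rank (col_mx u v) <= 1)%N by rewrite rank2.
rewrite uE; apply: leq_trans (rank_leq_row v); apply: mxrankS.
by rewrite col_mx_sub scalemx_sub ?submx_refl.
Qed.

Lemma aff_pdistinct h u v : pdistinct u v -> hval h u != 0 -> aff h u != aff h v.
Proof.
move=> uv hu_neq0; apply: contra_neq (pdistinct_neqZ _ _ (hval h u / hval h v) uv).
by rewrite /aff -scalerA => <-; rewrite scalerA mulfV // scale1r.
Qed.

Lemma hval1_lift_aff h u x :
  hval h u != 0 -> (exists c : C, x = c *: u) -> hval h x = 1 -> x = aff h u.
Proof.
move=> hu_neq0 [c ->]; rewrite hvalZ => c_hu; rewrite /aff; congr (_ *: _).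
by apply: (mulIf hu_neq0); rewrite c_hu mulVf.
Qed.

End AffineChart.

Definition weight_ratio {G : bgraph} {F : fieldType} (mu : Ed G -> F) (E : Ed G) : F :=
  mu (rotB G (rotB G E)) / mu (rotB G E).

Section AffineGaugeRelations.
Context {R : realType} {d : nat} {G : bgraph}.
Context {T V : Wv G -> 'rV[R[i]]_(d.+1)} {h : 'cV[R[i]]_(d.+1)} {mu : Ed G -> R[i]}.
Hypothesis bendP : forall e e', bend G e = bend G e' <-> fconnect (rotB G) e e'.
Hypothesis bdeg3 : forall b, #|[set e | bend G e == b]| = 3.
Hypothesis TCD : is_TCD T.
Hypothesis gen : generic h T.
Hypothesis VRC : is_VRC_aff T h V mu.

Lemma vrc_lift_aff w : V w = aff h (T w).
Proof. by case: VRC => lift normalized _ _; apply: hval1_lift_aff (gen.2 w) _ _. Qed.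

Lemma vrc_black_relation E :
  V (wend G (rotB G E)) - V (wend G E) =
  weight_ratio mu E *: (V (wend G E) - V (wend G (rotB G (rotB G E)))).
Proof.
case: VRC => _ normalized mu_neq0 balanced.
have star_sum := balanced (bend G E); rewrite big_black_star // in star_sum.
have weight_sum : mu E + mu (rotB G E) + mu (rotB G (rotB G E)) = 0.
  by have := congr1 (hval h) star_sum; rewrite !hvalD !hvalZ !normalized !mulr1 hval0.
exact: affine_relation_ratio weight_sum star_sum (mu_neq0 _).
Qed.

Lemma vrc_lift_sub_neq0 E : V (wend G E) - V (wend G (rotB G (rotB G E))) != 0.
Proof.
rewrite subr_eq0 !vrc_lift_aff; case: (TCD.2 E) => _ _ distinct13 _.
exact: aff_pdistinct distinct13 (gen.2 _).
Qed.

Lemma star_ratio_factor E :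
  vratio (aff h (T (wend G (rotB G E))) - aff h (T (wend G E)))
         (aff h (T (wend G E)) - aff h (T (wend G (rotB G (rotB G E))))) =
  weight_ratio mu E.
Proof. by rewrite -!vrc_lift_aff vrc_black_relation vratioZ // vrc_lift_sub_neq0. Qed.

Lemma lam_factor E :
  lam h (T (wend G (rotB G E))) (T (wend G (rotB G (rotB G E)))) (T (wend G E)) =
  - weight_ratio mu E.
Proof.
rewrite /lam -!vrc_lift_aff vrc_black_relation -[V (wend G E) - _]opprB.
by rewrite scalerN -scaleNr vratioZ // -opprB oppr_eq0 vrc_lift_sub_neq0.
Qed.

End AffineGaugeRelations.

Theorem proposition7p18 (R : realType) (G : bgraph) (d : nat)
  (T : Wv G -> 'rV[R[i]]_(d.+1)) (h : 'cV[R[i]]_(d.+1))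
  (V : Wv G -> 'rV[R[i]]_(d.+1)) (mu : Ed G -> R[i]) (e0 : Ed G) :
  is_BTB G -> minimal G -> is_TCD T -> generic h T ->
  is_VRC_aff T h V mu ->
  ~~ bdry G (wend G e0) ->
  let m := wdeg (wend G e0) in
  let Tw := T (wend G e0) in
  let Ti := fun i : 'I_m => T (wend G (rotB G (iter i (rotW G) e0))) in
  let Ti' := fun i : 'I_m => T (wend G (rotB G (rotB G (iter i (rotW G) e0)))) in
  affY mu e0 = (-1) ^+ m.+1 * sr h Tw Ti Ti' /\
  (-1) ^+ m.+1 * sr h Tw Ti Ti' = - \prod_(i < m) lam h (Ti i) (Ti' i) Tw.
Proof.
move=> [_ _ [bendP wendP bdeg3 _] _ _] _ TCD gen VRC _ m Tw Ti Ti'.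
have sr_eq : sr h Tw Ti Ti' = \prod_(i < m) weight_ratio mu (iter i (rotW G) e0).
  apply: eq_bigr => i _; rewrite /Tw -(wend_iter_rotW wendP i e0).
  exact: (star_ratio_factor bendP bdeg3 TCD gen VRC).
split; first by rewrite sr_eq.
under eq_bigr => i _ do
  rewrite /Tw -(wend_iter_rotW wendP i e0) (lam_factor bendP bdeg3 TCD gen VRC).
by rewrite sr_eq prodrN card_ord exprS mulN1r mulNr.
Qed.
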